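(* In the setting of the context, for each of the following six families of linear inequalities in $(\mathbf x,\mathbf y)\in\mathbb R^{2T}$, and for any given point $(\mathbf x,\mathbf y)\in\mathbb R_+^{2T}$, a most violated inequality of the family can be determined in $O(T)$ time if a violated inequality of the family exists. Here $\sigma=\lfloor(\overline C-\overline V)/V\rfloor$ and $\eta$ denotes a real parameter. (F1) $x_t\le\overline C y_t-\sum_{s\in\mathcal S}(\overline C-\overline V-sV)(y_{t-s}-y_{t-s-1})$ over all $\mathcal S\subseteq[0,\min\{L-1,T-2,\sigma\}]_{\mathbb Z}$ and $t\in[1,T]_{\mathbb Z}$ with $t\ge s+2$ for all $s\in\mathcal S$. (F2) $x_t\le\overline C y_t-\sum_{s\in\mathcal S}(\overline C-\overline V-sV)(y_{t+s}-y_{t+s+1})$ over the same $\mathcal S$ and $t\in[1,T]_{\mathbb Z}$ with $t\le T-s-1$ for all $s\in\mathcal S$. (F3) $x_t\le(\overline C-\eta V)y_t+\eta Vy_{t+1}-\sum_{s\in\mathcal S}(\overline C-\overline V-sV)(y_{t-s}-y_{t-s-1})$ over all $\mathcal S\subseteq[0,\min\{L-1,T-3,\sigma\}]_{\mathbb Z}$, real $\eta\in[0,\min\{L-1,(\overline C-\overline V)/V\}]$, and $t\in[1,T-1]_{\mathbb Z}$ with $t\ge s+2$ for all $s\in\mathcal S$. (F4) $x_t\le(\overline C-\eta V)y_t+\eta Vy_{t-1}-\sum_{s\in\mathcal S}(\overline C-\overline V-sV)(y_{t+s}-y_{t+s+1})$ over the same $\mathcal S,\eta$ as in (F3) and $t\in[2,T]_{\mathbb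 Z}$ with $t\le T-s-1$ for all $s\in\mathcal S$. (F5) $x_t\le(\overline V+\eta V)y_t+(\overline C-\overline V-\eta V)y_{t-1}-\sum_{s\in\mathcal S}(\overline C-\overline V-sV)(y_{t-s}-y_{t-s-1})$ over all $\mathcal S\subseteq[1,\min\{L,T-2,\sigma\}]_{\mathbb Z}$, real $\eta\in[0,\min\{L,(\overline C-\overline V)/V\}]$, and $t\in[2,T]_{\mathbb Z}$ with $t\ge s+2$ for all $s\in\mathcal S$. (F6) $x_t\le(\overline V+\eta V)y_t+(\overline C-\overline V-\eta V)y_{t+1}-\sum_{s\in\mathcal S}(\overline C-\overline V-sV)(y_{t+s}-y_{t+s+1})$ over the same $\mathcal S,\eta$ as in (F5) and $t\in[1,T-1]_{\mathbb Z}$ with $t\le T-s-1$ for all $s\in\mathcal S$.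
   Context: For integers $a,b$, $[a,b]_{\mathbb Z}=\{a,a+1,\dots,b\}$ if $a\le b$ and $\emptyset$ otherwise. Fix a positive integer $T$, a positive integer $L$ (minimum up time), and reals $\overline C,\underline C,V,\overline V$ with $\overline C>\underline C>0$, $V>0$, $\overline V+V\le\overline C$ and $\underline C<\overline V<\underline C+V$; $\mathbf x=(x_1,\dots,x_T)$, $\mathbf y=(y_1,\dots,y_T)$. For an inequality $a^\top(\mathbf x,\mathbf y)\le b$, its violation at a given point is $a^\top(\mathbf x,\mathbf y)-b$; it is violated if this is positive, and a most violated inequality of a family is one maximizing this quantity over the family. Time is measured in arithmetic operations and comparisons on the input numbers. *)

From HB Require Import structures.
From mathcomp Require Import all_boot all_order all_algebra.
From mathcomp Require Import reals.
Set Implicit Arguments. Unset Strict Implicit. Unset Printing Implicit Defensive.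
Import Order.TTheory GRing.Theory Num.Theory.
Local Open Scope ring_scope.

(* Model of computation: algebraic computation trees.                 *)
(* Registers hold reals; initially the input numbers.  Each internal   *)
(* node performs ONE arithmetic operation (on two registers, result    *)
(* appended as a new register), pushes one rational constant, or      *)
(* performs ONE comparison r_i <= r_j and branches.  A leaf outputs an *)
(* inequality of a family: (t, Sx, index of the register holding eta).  *)
(* Running time = number of internal nodes on the execution path.      *)
Inductive aop := AAdd | ASub | AMul | ADiv.

Inductive ctree :=
| CLeaf of nat & seq nat & nat
| CConst of rat & ctree
| CArith of aop & nat & nat & ctree
| CBranch of nat & nat & ctree & ctree.

Definition aop_eval (R : realType) (o : aop) (a b : R) : R :=
  match o with AAdd => a + b | ASub => a - b | AMul => a * b | ADiv => a / b end.

Fixpoint run (R : realType) (p : ctree) (regs : seq R) : (nat * seq nat * R) * nat :=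
  match p with
  | CLeaf t Sx e => ((t, Sx, nth 0 regs e), 0%N)
  | CConst q k => let r := run k (rcons regs (ratr q)) in (r.1, r.2.+1)
  | CArith o i j k =>
      let r := run k (rcons regs (aop_eval o (nth 0 regs i) (nth 0 regs j))) in
      (r.1, r.2.+1)
  | CBranch i j k1 k2 =>
      let r := if nth 0 regs i <= nth 0 regs j then run k1 regs else run k2 regs in
      (r.1, r.2.+1)
  end.

Definition inputs (R : realType) (T : nat) (Cb Cu V Vb : R) (x y : nat -> R) : seq R :=
  [:: Cb; Cu; V; Vb] ++ [seq x i | i <- iota 1 T] ++ [seq y i | i <- iota 1 T].

(* The six families.  x, y are indexed 1..T (other values irrelevant). *)
Inductive fam := F1 | F2 | F3 | F4 | F5 | F6.

Definition sigma (R : realType) (Cb V Vb : R) : int := Num.floor ((Cb - Vb) / V).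

Definition sum_back (R : realType) (Cb V Vb : R) (y : nat -> R) (t : nat) (Sx : seq nat) : R :=
  \sum_(s <- Sx) (Cb - Vb - s%:R * V) * (y (t - s)%N - y (t - s - 1)%N).
Definition sum_fwd (R : realType) (Cb V Vb : R) (y : nat -> R) (t : nat) (Sx : seq nat) : R :=
  \sum_(s <- Sx) (Cb - Vb - s%:R * V) * (y (t + s)%N - y (t + s + 1)%N).

Definition rhs (R : realType) (f : fam) (Cb V Vb : R) (y : nat -> R)
    (t : nat) (Sx : seq nat) (eta : R) : R :=
  match f with
  | F1 => Cb * y t - sum_back Cb V Vb y t Sx
  | F2 => Cb * y t - sum_fwd Cb V Vb y t Sx
  | F3 => (Cb - eta * V) * y t + eta * V * y t.+1 - sum_back Cb V Vb y t Sx
  | F4 => (Cb - eta * V) * y t + eta * V * y t.-1 - sum_fwd Cb V Vb y t Sx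
  | F5 => (Vb + eta * V) * y t + (Cb - Vb - eta * V) * y t.-1 - sum_back Cb V Vb y t Sx
  | F6 => (Vb + eta * V) * y t + (Cb - Vb - eta * V) * y t.+1 - sum_fwd Cb V Vb y t Sx
  end.

Definition violation (R : realType) (f : fam) (Cb V Vb : R) (x y : nat -> R)
    (t : nat) (Sx : seq nat) (eta : R) : R :=
  x t - rhs f Cb V Vb y t Sx eta.

(* Sx is a subset (duplicate-free list) of [lo, min{L - dl, T - dT, sigma}]_Z,
   written without truncated subtraction *)
Definition S_ok (R : realType) (Cb V Vb : R) (T L lo dL dT : nat) (Sx : seq nat) : bool :=
  uniq Sx && all (fun s => [&& lo <= s, s + dL <= L, s + dT <= T
                          & (s%:Z <= sigma Cb V Vb)%R])%N Sx.

Definition in_family (R : realType) (f : fam) (T L : nat) (Cb V Vb : R)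
    (t : nat) (Sx : seq nat) (eta : R) : Prop :=
  match f with
  | F1 => S_ok Cb V Vb T L 0 1 2 Sx /\ (1 <= t <= T)%N
          /\ all (fun s => s + 2 <= t)%N Sx
  | F2 => S_ok Cb V Vb T L 0 1 2 Sx /\ (1 <= t <= T)%N
          /\ all (fun s => t + s + 1 <= T)%N Sx
  | F3 => S_ok Cb V Vb T L 0 1 3 Sx
          /\ 0 <= eta /\ eta <= (L%:R - 1) /\ eta <= (Cb - Vb) / V
          /\ (1 <= t /\ t + 1 <= T)%N /\ all (fun s => s + 2 <= t)%N Sx
  | F4 => S_ok Cb V Vb T L 0 1 3 Sx
          /\ 0 <= eta /\ eta <= (L%:R - 1) /\ eta <= (Cb - Vb) / V
          /\ (2 <= t <= T)%N /\ all (fun s => t + s + 1 <= T)%N Sx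
  | F5 => S_ok Cb V Vb T L 1 0 2 Sx
          /\ 0 <= eta /\ eta <= L%:R /\ eta <= (Cb - Vb) / V
          /\ (2 <= t <= T)%N /\ all (fun s => s + 2 <= t)%N Sx
  | F6 => S_ok Cb V Vb T L 1 0 2 Sx
          /\ 0 <= eta /\ eta <= L%:R /\ eta <= (Cb - Vb) / V
          /\ (1 <= t /\ t + 1 <= T)%N /\ all (fun s => t + s + 1 <= T)%N Sx
  end.

(* Up to the time reversal t |-> T + 1 - t, which maps F2, F4 and F6 to F1, F3 and F5, every
   family is an instance of one generic family whose violation at (t, S, eta) is
     x_t - a_t - eta V (y_(u t) - y_(v t)) + sum_(s in S) (Cb - Vb - s V) (y_(t-s) - y_(t-s-1)).
   For a fixed t the coefficients Cb - Vb - s V are nonnegative on the admissible s (s <= sigma),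
   so a best S consists of the admissible s at which y increases, and a best eta is 0 or its
   largest admissible value according to the sign of y_(u t) - y_(v t).  Since
   Cb - Vb - (t - j) V = (Cb - Vb - t V) + j V, the resulting sum over the window of indices
   j = t - s is a combination of differences of prefix sums of the positive increments d_j^+ and
   of j d_j^+, which are computed once.  Each t then costs O(1) operations, and one pass over t
   finds a most violated inequality. *)

From HB Require Import structures.
From mathcomp Require Import all_boot all_order all_algebra.
From mathcomp Require Import reals.
From mathcomp Require Import zify ring lra.
Set Implicit Arguments. Unset Strict Implicit. Unset Printing Implicit Defensive.
Import Order.TTheory GRing.Theory Num.Theory.
Local Open Scope ring_scope.

(* Programs in continuation-passing style: an instruction passes to its continuation the index of
   the register receiving its result. *)
Inductive prog (A : Type) : Type :=
| Ret of A
| Op of aop & nat & nat & (nat -> prog A)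
| Const of rat & (nat -> prog A)
| If of nat & nat & prog A & prog A.
Arguments Ret {A}.
Arguments Op {A}.
Arguments Const {A}.
Arguments If {A}.

Fixpoint bind A B (p : prog A) (f : A -> prog B) : prog B :=
  match p with
  | Ret a => f a
  | Op o i j k => Op o i j (fun r => bind (k r) f)
  | Const c k => Const c (fun r => bind (k r) f)
  | If i j p1 p2 => If i j (bind p1 f) (bind p2 f)
  end.

(* [n] is the number of registers in use, i.e. the index of the next fresh one. *)
Fixpoint compile A (p : prog A) (n : nat) (K : A -> nat -> ctree) : ctree :=
  match p with
  | Ret a => K a n
  | Op o i j k => CArith o i j (compile (k n) n.+1 K)
  | Const c k => CConst c (compile (k n) n.+1 K)
  | If i j p1 p2 => CBranch i j (compile p1 n K) (compile p2 n K)
  end.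

Inductive expr := Reg of nat | Cst of rat | Bin of aop & expr & expr.

Fixpoint emit (e : expr) : prog nat :=
  match e with
  | Reg i => Ret i
  | Cst c => Const c Ret
  | Bin o e1 e2 => bind (emit e1) (fun i => bind (emit e2) (fun j => Op o i j Ret))
  end.

Fixpoint ops (e : expr) : nat :=
  match e with
  | Reg _ => 0
  | Cst _ => 1
  | Bin _ e1 e2 => (ops e1 + ops e2).+1
  end.

Fixpoint within (n : nat) (e : expr) : bool :=
  match e with
  | Reg i => (i < n)%N
  | Cst _ => true
  | Bin _ e1 e2 => within n e1 && within n e2
  end.

Section Semantics.
Variable R : realType.
Implicit Types (regs : seq R).

Fixpoint exec A (p : prog A) regs : A * seq R :=
  match p with
  | Ret a => (a, regs)
  | Op o i j k => exec (k (size regs)) (rcons regs (aop_eval o (nth 0 regs i) (nth 0 regs j)))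
  | Const c k => exec (k (size regs)) (rcons regs (ratr c))
  | If i j p1 p2 => if nth 0 regs i <= nth 0 regs j then exec p1 regs else exec p2 regs
  end.

Fixpoint cost A (p : prog A) regs : nat :=
  match p with
  | Ret _ => 0
  | Op o i j k =>
      (cost (k (size regs)) (rcons regs (aop_eval o (nth 0 regs i) (nth 0 regs j)))).+1
  | Const c k => (cost (k (size regs)) (rcons regs (ratr c))).+1
  | If i j p1 p2 => (if nth 0 regs i <= nth 0 regs j then cost p1 regs else cost p2 regs).+1
  end.

Lemma run_compile A (p : prog A) K regs :
  run (compile p (size regs) K) regs =
  let r := run (K (exec p regs).1 (size (exec p regs).2)) (exec p regs).2 in
  (r.1, (r.2 + cost p regs)%N).
Proof.
elim: p regs => [a|o i j k IH|c k IH|i j p1 IH1 p2 IH2] regs /=.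
- by rewrite addn0; case: (run _ _).
- by have := IH (size regs) (rcons regs (aop_eval o (nth 0 regs i) (nth 0 regs j)));
    rewrite size_rcons => -> /=; rewrite addnS.
- by have := IH (size regs) (rcons regs (ratr c)); rewrite size_rcons => -> /=; rewrite addnS.
- by case: ifP => _; rewrite ?IH1 ?IH2 /= addnS.
Qed.

Lemma exec_bind A B (p : prog A) (f : A -> prog B) regs :
  exec (bind p f) regs = exec (f (exec p regs).1) (exec p regs).2.
Proof.
elim: p regs => [a|o i j k IH|c k IH|i j p1 IH1 p2 IH2] regs //=.
by case: ifP.
Qed.

Lemma cost_bind A B (p : prog A) (f : A -> prog B) regs :
  cost (bind p f) regs = (cost p regs + cost (f (exec p regs).1) (exec p regs).2)%N.
Proof.
elim: p regs => [a|o i j k IH|c k IH|i j p1 IH1 p2 IH2] regs //=.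
- by rewrite IH.
- by rewrite IH.
- by case: ifP; rewrite ?IH1 ?IH2.
Qed.

Lemma prefix_exec A (p : prog A) regs : prefix regs (exec p regs).2.
Proof.
elim: p regs => [a|o i j k IH|c k IH|i j p1 IH1 p2 IH2] regs /=.
- exact: prefix_refl.
- exact: prefix_trans _ _ _ (prefix_rcons _ _) (IH _ _).
- exact: prefix_trans _ _ _ (prefix_rcons _ _) (IH _ _).
- by case: ifP.
Qed.

Definition holds regs i v := (i < size regs)%N /\ nth 0 regs i = v.

Lemma holds_prefix regs regs' i v : prefix regs regs' -> holds regs i v -> holds regs' i v.
Proof.
move=> /prefixP[e ->] [lt_i <-].
by rewrite /holds size_cat nth_cat lt_i ltn_addr.
Qed.

Lemma holds_rcons regs v : holds (rcons regs v) (size regs) v.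
Proof. by rewrite /holds size_rcons nth_rcons ltnn eqxx. Qed.

Lemma holds_exec A (p : prog A) regs i v : holds regs i v -> holds (exec p regs).2 i v.
Proof. exact/holds_prefix/prefix_exec. Qed.

Lemma holds_lt regs i v : holds regs i v -> (i < size regs)%N.
Proof. by case. Qed.

Lemma nth_holds regs i v : holds regs i v -> nth 0 regs i = v.
Proof. by case. Qed.

Fixpoint eval regs (e : expr) : R :=
  match e with
  | Reg i => nth 0 regs i
  | Cst c => ratr c
  | Bin o e1 e2 => aop_eval o (eval regs e1) (eval regs e2)
  end.

Lemma within_le n m e : (n <= m)%N -> within n e -> within m e.
Proof.
move=> le_nm; elim: e => [i|c|o e1 IH1 e2 IH2] //=.
  by move=> lt_i; apply: leq_trans le_nm.
by case/andP=> /IH1-> /IH2->.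
Qed.

Lemma eval_prefix regs regs' e :
  prefix regs regs' -> within (size regs) e -> eval regs' e = eval regs e.
Proof.
move=> /prefixP[s ->]; elim: e => [i|c|o e1 IH1 e2 IH2] //=.
- by move=> lt_i; rewrite nth_cat lt_i.
- by case/andP=> /IH1-> /IH2->.
Qed.

Lemma exec_emit regs e :
  within (size regs) e -> holds (exec (emit e) regs).2 (exec (emit e) regs).1 (eval regs e).
Proof.
elim: e regs => [i|c|o e1 IH1 e2 IH2] regs /=; first by [].
  by move=> _; apply: holds_rcons.
case/andP=> in_e1 in_e2; rewrite !exec_bind /=.
set r1 := exec (emit e1) regs; set r2 := exec (emit e2) r1.2.
have pre1 : prefix regs r1.2 := prefix_exec _ _.
have pre2 : prefix r1.2 r2.2 := prefix_exec _ _.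
have in_e2' : within (size r1.2) e2 := within_le (size_prefix pre1) in_e2.
have h1 : holds r2.2 r1.1 (eval regs e1) := holds_prefix pre2 (IH1 _ in_e1).
have h2 : holds r2.2 r2.1 (eval regs e2).
  by rewrite -(eval_prefix pre1 in_e2); apply: IH2.
by rewrite (nth_holds h1) (nth_holds h2); apply: holds_rcons.
Qed.

Lemma cost_emit regs e : cost (emit e) regs = ops e.
Proof.
elim: e regs => [i|c|o e1 IH1 e2 IH2] regs //=.
by rewrite !cost_bind IH1 IH2 /= addn1 addnS.
Qed.

Definition cost_le A (p : prog A) n := forall regs, (cost p regs <= n)%N.

Lemma cost_le_emit e : cost_le (emit e) (ops e).
Proof. by move=> regs; rewrite cost_emit. Qed.

Lemma cost_le_bind A B (p : prog A) (f : A -> prog B) a n :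
  cost_le p a -> (forall x, cost_le (f x) (n - a)) -> (a <= n)%N -> cost_le (bind p f) n.
Proof.
move=> hp hf le_an regs; rewrite cost_bind -(subnKC le_an).
exact: leq_add (hp _) (hf _ _).
Qed.

Lemma cost_le_If A i j (p1 p2 : prog A) n :
  cost_le p1 n -> cost_le p2 n -> cost_le (If i j p1 p2) n.+1.
Proof. by move=> h1 h2 regs /=; case: ifP => _; [exact: h1 | exact: h2]. Qed.

Lemma exec_select A i j (k : nat -> prog A) regs :
  exec (bind (If i j (Ret i) (Ret j)) k) regs =
  exec (k (if nth 0 regs i <= nth 0 regs j then i else j)) regs.
Proof. by rewrite exec_bind /=; case: ifP. Qed.

End Semantics.

Ltac holds_tac := solve [eassumption | apply: holds_exec; holds_tac].
Ltac within_tac := rewrite /=; repeat (apply/andP; split); try done; apply: holds_lt; holds_tac.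

Opaque emit.


Lemma ler_sum_subset (R : numDomainType) (I : eqType) (r r' : seq I) (F : I -> R) :
  uniq r -> uniq r' -> {subset r <= r'} -> {in r', forall i, 0 <= F i} ->
  \sum_(i <- r) F i <= \sum_(i <- r') F i.
Proof.
move=> uniq_r uniq_r' sub_rr' F_ge0.
rewrite [leRHS](bigID (mem r)) /=.
have -> : \sum_(i <- r' | i \in r) F i = \sum_(i <- r) F i.
  rewrite -big_filter; apply/perm_big/uniq_perm; rewrite ?filter_uniq // => i.
  by rewrite mem_filter andb_idr //; apply: sub_rr'.
by rewrite lerDl big_seq_cond sumr_ge0 // => i /andP[/F_ge0].
Qed.

Lemma le_sigma (R : realType) (Cb V Vb : R) (s : nat) :
  (s%:Z <= sigma Cb V Vb) = (s%:R <= (Cb - Vb) / V).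
Proof. by rewrite /sigma floor_ge_int. Qed.

(* [gen_in] and [gen_viol] below: S ranges over the subsets of
   [s_min, min(L - L_gap, T - T_gap, sigma)], eta over [0, min(eta_max, (Cb - Vb) / V)] when
   [has_eta], and t over [t_min, t_max]. *)
Record family_shape := FamilyShape {
  s_min : nat; L_gap : nat; T_gap : nat;
  t_min : nat; t_max : nat;
  has_eta : bool; eta_max : nat;
  ramp : bool; t_prev : nat -> nat;
  eta_up : nat -> nat; eta_down : nat -> nat }.

Section Generic.
Variables (R : realType) (P : family_shape) (T L : nat) (Cb V Vb : R) (x y : nat -> R).

Definition ramp_ratio := (Cb - Vb) / V.

Definition main_term t := if ramp P then Vb * y t + (Cb - Vb) * y (t_prev P t) else Cb * y t.

Definition eta_ok (eta : R) :=
  has_eta P -> [/\ 0 <= eta, eta <= (eta_max P)%:R & eta <= ramp_ratio].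

Definition gen_in t S eta :=
  [/\ (t_min P <= t <= t_max P)%N, S_ok Cb V Vb T L (s_min P) (L_gap P) (T_gap P) S,
      all (fun s => s + 2 <= t)%N S & eta_ok eta].

Definition gen_viol t S eta :=
  x t - main_term t - eta * V * (y (eta_up P t) - y (eta_down P t)) + sum_back Cb V Vb y t S.

Definition rise j := if y j <= y j.-1 then 0 else y j - y j.-1.

Definition rise_sum k := \sum_(2 <= j < k.+1) rise j.
Definition rise_moment k := \sum_(2 <= j < k.+1) j%:R * rise j.

Definition eta_cap := if (eta_max P)%:R <= ramp_ratio then (eta_max P)%:R else ramp_ratio.

Definition best_eta t := if y (eta_down P t) <= y (eta_up P t) then 0 else eta_cap.

Variable N : nat.

(* The indices j = t - s of the admissible s; j >= 2 because s + 2 <= t. *)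
Definition win_lo t := maxn (t - N) 1.
Definition win_hi t := (t - s_min P)%N.
Definition window t := index_iota (win_lo t).+1 (win_hi t).+1.

Definition best_S t := [seq (t - j)%N | j <- window t & ~~ (y j <= y j.-1)].

Definition best_viol t :=
  x t - main_term t - best_eta t * V * (y (eta_up P t) - y (eta_down P t)) +
  \sum_(j <- window t) (Cb - Vb - (t - j)%:R * V) * rise j.

Lemma mem_window t j : (j \in window t) = (win_lo t < j <= win_hi t)%N.
Proof. by rewrite mem_index_iota ltnS. Qed.

Lemma uniq_window t : uniq (window t).
Proof. exact: iota_uniq. Qed.

Lemma rise_ge0 j : 0 <= rise j.
Proof. by rewrite /rise; case: ifP => // /negbT; rewrite -ltNge subr_ge0 => /ltW. Qed.

Lemma rise_ge j : y j - y j.-1 <= rise j.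
Proof. by rewrite /rise; case: ifP => // le_y; rewrite subr_le0. Qed.

Lemma gen_viol_best t : gen_viol t (best_S t) (best_eta t) = best_viol t.
Proof.
rewrite /gen_viol /best_viol /sum_back; congr (_ + _).
rewrite big_map big_filter big_mkcond /=; apply: eq_big_seq => j.
rewrite mem_window /win_lo /win_hi => j_win.
have -> : (t - (t - j) = j)%N by lia.
by rewrite subn1 /rise; case: leP; rewrite ?mulr0.
Qed.

(* Cb - Vb - (t - j) V = (Cb - Vb - t V) + j V. *)
Lemma window_sumE t :
  \sum_(j <- window t) (Cb - Vb - (t - j)%:R * V) * rise j =
  if (win_lo t < win_hi t)%N then
    (Cb - Vb - t%:R * V) * (rise_sum (win_hi t) - rise_sum (win_lo t)) +
    V * (rise_moment (win_hi t) - rise_moment (win_lo t))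
  else 0.
Proof.
rewrite /window; case: ltnP => lo_hi; last by rewrite big_geq.
have lo_ge1 : (1 <= win_lo t)%N by rewrite leq_maxr.
have hi_le : (win_hi t <= t)%N by rewrite leq_subr.
have range_sum (F : nat -> R) : \sum_((win_lo t).+1 <= j < (win_hi t).+1) F j =
    \sum_(2 <= j < (win_hi t).+1) F j - \sum_(2 <= j < (win_lo t).+1) F j.
  rewrite [X in _ = X - _](@big_cat_nat _ _ _ (win_lo t).+1) /=; [by rewrite addrC addrK | lia | lia].
rewrite /rise_sum /rise_moment -!range_sum !mulr_sumr -big_split /=.
by apply: eq_big_nat => j j_range; rewrite natrB; [ring | lia].
Qed.

Hypothesis V_gt0 : 0 < V.
Hypothesis Vb_le_Cb : Vb <= Cb.
Hypothesis eta_inert : ~~ has_eta P -> eta_up P =1 eta_down P.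
Hypothesis ltn_N : forall s,
  (s < N)%N = [&& (s + L_gap P <= L)%N, (s + T_gap P <= T)%N & s%:Z <= sigma Cb V Vb].

Lemma coef_ge0 (s : nat) : (s%:Z <= sigma Cb V Vb)%R -> 0 <= Cb - Vb - s%:R * V.
Proof. by rewrite le_sigma ler_pdivlMr // subr_ge0. Qed.

Lemma eta_ok_best t : eta_ok (best_eta t).
Proof.
have ratio_ge0 : 0 <= ramp_ratio by rewrite divr_ge0 ?subr_ge0 // ltW.
rewrite /best_eta /eta_cap => _; case: ifP => _; first by split.
by case: ifP => [|/negbT]; split => //; rewrite ltW // ltNge.
Qed.

Lemma gen_in_best t : (t_min P <= t <= t_max P)%N -> gen_in t (best_S t) (best_eta t).
Proof.
move=> t_range; split => //; last exact: eta_ok_best.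
  rewrite /S_ok map_inj_in_uniq ?filter_uniq ?uniq_window //=; last first.
    by move=> i j; rewrite !mem_filter !mem_window /win_lo /win_hi; lia.
  apply/allP => s /mapP[j]; rewrite mem_filter mem_window => /andP[_ j_win] ->.
  have : (t - j < N)%N by move: j_win; rewrite /win_lo /win_hi; lia.
  rewrite ltn_N => /and3P[-> -> ->]; rewrite andbT.
  by move: j_win; rewrite /win_lo /win_hi; lia.
apply/allP => s /mapP[j]; rewrite mem_filter mem_window /win_lo /win_hi => /andP[_ j_win] ->.
lia.
Qed.

Lemma eta_term_le_best t eta : eta_ok eta ->
  best_eta t * V * (y (eta_up P t) - y (eta_down P t)) <=
  eta * V * (y (eta_up P t) - y (eta_down P t)).
Proof.
case: (boolP (has_eta P)) => [eta_on /(_ eta_on) [eta_ge0 eta_le_max eta_le_ratio] | /eta_inert ->];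
  last by rewrite !subrr !mulr0.
rewrite /best_eta; case: ifP => [le_y | /negbT lt_y].
  by rewrite !mul0r mulr_ge0 ?mulr_ge0 ?subr_ge0 // ltW.
have eta_le_cap : eta <= eta_cap by rewrite /eta_cap; case: ifP.
have : V * (y (eta_up P t) - y (eta_down P t)) < 0 by rewrite pmulr_rlt0 // subr_lt0 ltNge.
rewrite -!mulrA; nra.
Qed.

Lemma sum_back_le_window t S :
  S_ok Cb V Vb T L (s_min P) (L_gap P) (T_gap P) S -> all (fun s => s + 2 <= t)%N S ->
  sum_back Cb V Vb y t S <= \sum_(j <- window t) (Cb - Vb - (t - j)%:R * V) * rise j.
Proof.
move=> /andP[uniq_S /allP S_ok_s] /allP S_t.
have S_coef s : s \in S -> 0 <= Cb - Vb - s%:R * V.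
  by move=> /S_ok_s /and4P[_ _ _]; apply: coef_ge0.
apply: (@le_trans _ _ (\sum_(s <- S) (Cb - Vb - s%:R * V) * rise (t - s))).
  rewrite /sum_back big_seq [leRHS]big_seq; apply: ler_sum => s s_in.
  by rewrite ler_wpM2l ?S_coef // subn1; apply: rise_ge.
rewrite -[X in _ <= X](eq_big_seq (F1 := fun j => (Cb - Vb - (t - j)%:R * V) * rise (t - (t - j))));
  last first.
  by move=> j; rewrite mem_window /win_lo /win_hi => j_win; have -> : (t - (t - j) = j)%N by lia.
rewrite -(big_map (fun j => t - j)%N xpredT (fun s => (Cb - Vb - s%:R * V) * rise (t - s))).
apply: ler_sum_subset => //.
- by rewrite map_inj_in_uniq ?uniq_window // => i j; rewrite !mem_window /win_lo /win_hi; lia.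
- move=> s s_in; have /and4P[s_lo s_L s_T s_sig] := S_ok_s s s_in.
  have s_t := S_t s s_in.
  have : (s < N)%N by rewrite ltn_N s_L s_T.
  by move=> s_N; apply/mapP; exists (t - s)%N; rewrite ?mem_window /win_lo /win_hi; lia.
- move=> s /mapP[j]; rewrite mem_window /win_lo /win_hi => j_win ->.
  apply: mulr_ge0; last exact: rise_ge0.
  have : (t - j < N)%N by lia.
  by rewrite ltn_N => /and3P[_ _ /coef_ge0].
Qed.

Lemma gen_viol_le_best t S eta : gen_in t S eta -> gen_viol t S eta <= best_viol t.
Proof.
case=> _ S_ok_S S_t eta_okS; rewrite /gen_viol /best_viol lerD //.
  by rewrite lerB // eta_term_le_best.
exact: sum_back_le_window.
Qed.

End Generic.

Fixpoint scan (iq s fuel : nat) : prog nat :=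
  match fuel with
  | 0 => Ret s
  | f.+1 => Const s%:R (fun i => If i iq (scan iq s.+1 f) (Ret s))
  end.

Notation sums := ((nat -> nat) * (nat -> nat) * (nat -> bool))%type.

Definition upd T (f : nat -> T) j v := fun k => if k == j then v else f k.

Definition extend (s : sums) j n1 n2 b : sums := (upd s.1.1 j n1, upd s.1.2 j n2, upd s.2 j b).

(* Step j stores in [s.1.1 j] and [s.1.2 j] the registers holding [rise_sum y j] and
   [rise_moment y j], and in [s.2 j] whether y rises at j. *)
Fixpoint prefix_sums (yi : nat -> nat) (j fuel : nat) (s : sums) : prog sums :=
  match fuel with
  | 0 => Ret s
  | f.+1 =>
      let d := Bin ASub (Reg (yi j)) (Reg (yi j.-1)) in
      If (yi j) (yi j.-1)
        (prefix_sums yi j.+1 f (extend s j (s.1.1 j.-1) (s.1.2 j.-1) false))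
        (bind (emit (Bin AAdd (Reg (s.1.1 j.-1)) d)) (fun n1 =>
         bind (emit (Bin AAdd (Reg (s.1.2 j.-1)) (Bin AMul (Cst j%:R) d))) (fun n2 =>
         prefix_sums yi j.+1 f (extend s j n1 n2 true))))
  end.

Section Loops.
Variable R : realType.
Implicit Types (regs : seq R).

Lemma exec_scan iq (q : R) s fuel regs :
  holds regs iq q -> (forall s', (s' < s)%N -> s'%:R <= q) ->
  forall s', (s' < (exec (scan iq s fuel) regs).1)%N = (s' < s + fuel)%N && (s'%:R <= q).
Proof.
elim: fuel s regs => [|f IH] s regs q_reg below s' /=.
  by rewrite addn0; case: ltnP => // /below.
rewrite (nth_holds (holds_rcons _ _)) (nth_holds (holds_prefix (prefix_rcons _ _) q_reg)).
rewrite ratr_nat; case: ifP => [le_sq | /negbT gt_sq] /=.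
  rewrite IH ?addSnnS //; first exact: holds_prefix (prefix_rcons _ _) q_reg.
  by move=> s''; rewrite ltnS leq_eqVlt => /orP[/eqP-> | /below].
case: (ltnP s' s) => [lt_s's | le_ss'].
  by rewrite below // andbT; apply/esym/ltn_addr.
suff -> : (s'%:R <= q) = false by rewrite andbF.
by apply/negbTE; apply: contra gt_sq; apply: le_trans; rewrite ler_nat.
Qed.

Lemma cost_scan iq s fuel : cost_le R (scan iq s fuel) (2 * fuel).
Proof.
elim: fuel s => [|f IH] s regs //=.
by case: ifP => _ /=; [have := IH s.+1 (rcons regs (ratr s%:R)) | ]; lia.
Qed.

Definition sums_ok (y : nat -> R) regs (s : sums) k :=
  [/\ holds regs (s.1.1 k) (rise_sum y k), holds regs (s.1.2 k) (rise_moment y k)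
    & (2 <= k)%N -> s.2 k = ~~ (y k <= y k.-1)].

Lemma rise_sumS (y : nat -> R) j : (2 <= j)%N -> rise_sum y j = rise_sum y j.-1 + rise y j.
Proof. by case: j => // j j_ge2; rewrite /rise_sum big_nat_recr. Qed.

Lemma rise_momentS (y : nat -> R) j : (2 <= j)%N ->
  rise_moment y j = rise_moment y j.-1 + j%:R * rise y j.
Proof. by case: j => // j j_ge2; rewrite /rise_moment big_nat_recr. Qed.

Lemma sums_ok_extend y regs regs' s j n1 n2 b :
  prefix regs regs' -> (forall k, (1 <= k < j)%N -> sums_ok y regs s k) ->
  sums_ok y regs' (extend s j n1 n2 b) j ->
  forall k, (1 <= k < j.+1)%N -> sums_ok y regs' (extend s j n1 n2 b) k.
Proof.
move=> pre ok_s ok_j k /andP[k_ge1]; rewrite ltnS leq_eqVlt => /orP[/eqP-> // | lt_kj].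
have [h1 h2 h3] := ok_s k ltac:(lia).
by rewrite /sums_ok /= /upd ltn_eqF //; split => //; apply: holds_prefix pre _.
Qed.

Lemma exec_prefix_sums (y : nat -> R) T yi j fuel s regs :
  (2 <= j)%N -> (j + fuel <= T.+1)%N ->
  (forall k, (1 <= k <= T)%N -> holds regs (yi k) (y k)) ->
  (forall k, (1 <= k < j)%N -> sums_ok y regs s k) ->
  forall k, (1 <= k < j + fuel)%N ->
  sums_ok y (exec (prefix_sums yi j fuel s) regs).2 (exec (prefix_sums yi j fuel s) regs).1 k.
Proof.
elim: fuel j s regs => [|f IH] j s regs j_ge2 j_le y_regs ok_s; first by rewrite addn0.
have y_j := y_regs j ltac:(lia); have y_j1 := y_regs j.-1 ltac:(lia).
have [p1_j1 p2_j1 _] := ok_s j.-1 ltac:(lia).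
rewrite addnS -addSn /= (nth_holds y_j) (nth_holds y_j1).
case: ifP => le_y.
  apply: IH; [lia | lia | done | apply: sums_ok_extend (prefix_refl _) ok_s _].
  rewrite /sums_ok /= /upd eqxx rise_sumS // rise_momentS // /rise le_y addr0 mulr0 addr0.
  by split => // _; rewrite le_y.
rewrite exec_bind; set e1 := Bin AAdd (Reg (s.1.1 j.-1)) _; set r1 := exec (emit e1) regs.
rewrite /= exec_bind; set e2 := Bin AAdd _ _; set r2 := exec (emit e2) r1.2; rewrite /=.
have pre1 : prefix regs r1.2 := prefix_exec _ _.
have pre2 : prefix r1.2 r2.2 := prefix_exec _ _.
have pre12 : prefix regs r2.2 := prefix_trans pre1 pre2.
have in_e2 : within (size regs) e2 by rewrite /e2; within_tac.
have n1 : holds r2.2 r1.1 (rise_sum y j).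
  apply: holds_prefix pre2 _; have := @exec_emit _ regs e1.
  rewrite /e1 /= (nth_holds p1_j1) (nth_holds y_j) (nth_holds y_j1) [rise_sum _ j]rise_sumS //.
  by rewrite /rise le_y; apply; within_tac.
have n2 : holds r2.2 r2.1 (rise_moment y j).
  have := exec_emit (within_le (size_prefix pre1) in_e2); rewrite (eval_prefix pre1 in_e2).
  rewrite /e2 /= (nth_holds p2_j1) (nth_holds y_j) (nth_holds y_j1) ratr_nat.
  by rewrite [rise_moment _ j]rise_momentS // /rise le_y.
apply: IH; [lia | lia | | apply: sums_ok_extend pre12 ok_s _].
  by move=> k k_range; apply/(holds_prefix pre12)/y_regs.
by rewrite /sums_ok /= /upd eqxx; split => // _; rewrite le_y.
Qed.

Lemma cost_prefix_sums yi j fuel s : cost_le R (prefix_sums yi j fuel s) (7 * fuel).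
Proof.
elim: fuel j s => [|f IH] j s regs //=.
case: ifP => _; first by have := IH j.+1 (extend s j (s.1.1 j.-1) (s.1.2 j.-1) false) regs; lia.
rewrite cost_bind cost_emit; set r1 := exec (emit _) regs.
rewrite /= cost_bind cost_emit; set r2 := exec (emit _) r1.2.
by have := IH j.+1 (extend s j r1.1 r2.1 true) r2.2; rewrite /=; lia.
Qed.

End Loops.

(* Registers 0, 2 and 3 hold the inputs Cb, V and Vb (see [inputs]). *)
Record layout := Layout {
  iA : nat; iz : nat; iE : nat; iEV : nat;
  xi : nat -> nat; yi : nat -> nat; p1 : nat -> nat; p2 : nat -> nat }.

Definition head_expr (P : family_shape) (c : layout) t :=
  if ramp P then Bin AAdd (Bin AMul (Reg 3) (Reg (yi c t))) (Bin AMul (Reg (iA c)) (Reg (yi c (t_prev P t))))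
  else Bin AMul (Reg 0) (Reg (yi c t)).

Definition window_expr (P : family_shape) N (c : layout) t :=
  if (win_lo N t < win_hi P t)%N then
    Bin AAdd
      (Bin AMul (Bin ASub (Reg (iA c)) (Bin AMul (Cst t%:R) (Reg 2)))
                (Bin ASub (Reg (p1 c (win_hi P t))) (Reg (p1 c (win_lo N t)))))
      (Bin AMul (Reg 2) (Bin ASub (Reg (p2 c (win_hi P t))) (Reg (p2 c (win_lo N t)))))
  else Reg (iz c).

Definition value_expr P N c t (with_eta : bool) :=
  let e := Bin ASub (Reg (xi c t)) (head_expr P c t) in
  let e := if with_eta then
      Bin ASub e (Bin AMul (Reg (iEV c)) (Bin ASub (Reg (yi c (eta_up P t))) (Reg (yi c (eta_down P t)))))
    else e in
  Bin AAdd e (window_expr P N c t).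

Definition tstep P N c t : prog (nat * nat) :=
  If (yi c (eta_down P t)) (yi c (eta_up P t))
    (bind (emit (value_expr P N c t false)) (fun i => Ret (i, iz c)))
    (bind (emit (value_expr P N c t true)) (fun i => Ret (i, iE c))).

Fixpoint tloop P N c (ts : seq nat) (best : nat * nat * nat) : prog (nat * nat * nat) :=
  match ts with
  | [::] => Ret best
  | t :: ts =>
      bind (tstep P N c t) (fun r =>
      If r.1 best.1.2 (tloop P N c ts best) (tloop P N c ts (t, r.1, r.2)))
  end.

Section Sweep.
Variables (R : realType) (P : family_shape) (T L : nat) (Cb V Vb : R) (x y : nat -> R).
Variables (N : nat) (c : layout).
Implicit Types (regs : seq R).

Let bv := best_viol P Cb V Vb x y N.

Definition layout_ok regs :=
  [/\ [/\ holds regs 0 Cb, holds regs 2 V & holds regs 3 Vb],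
      [/\ holds regs (iA c) (Cb - Vb), holds regs (iz c) 0, holds regs (iE c) (eta_cap P Cb V Vb)
        & holds regs (iEV c) (eta_cap P Cb V Vb * V)]
    & forall k, (1 <= k <= T)%N ->
      [/\ holds regs (xi c k) (x k), holds regs (yi c k) (y k),
          holds regs (p1 c k) (rise_sum y k) & holds regs (p2 c k) (rise_moment y k)]].

Definition t_ok t :=
  [/\ 1 <= t <= T, 1 <= t_prev P t <= T, 1 <= eta_up P t <= T & 1 <= eta_down P t <= T]%N.

Lemma layout_ok_prefix regs regs' : prefix regs regs' -> layout_ok regs -> layout_ok regs'.
Proof.
move=> pre [[h0 h2 h3] [hA hz hE hEV] hk].
split; first by split; apply: holds_prefix pre _.
  by split; apply: holds_prefix pre _.
by move=> k /hk[? ? ? ?]; split; apply: holds_prefix pre _.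
Qed.

Ltac nth_tac :=
  repeat match goal with h : holds ?r ?i _ |- context [nth 0 ?r ?i] => rewrite (nth_holds h) end.

Lemma eval_value_expr regs t b : layout_ok regs -> t_ok t ->
  within (size regs) (value_expr P N c t b) /\
  eval regs (value_expr P N c t b) =
    x t - main_term P Cb Vb y t - (if b then eta_cap P Cb V Vb else 0) * V *
      (y (eta_up P t) - y (eta_down P t)) +
    \sum_(j <- window P N t) (Cb - Vb - (t - j)%:R * V) * rise y j.
Proof.
move=> [[h0 h2 h3] [hA hz hE hEV] hk] [t_T /hk[_ hw _ _] /hk[_ hu _ _] /hk[_ hv _ _]].
have [hx hy _ _] := hk t t_T.
rewrite window_sumE /value_expr /window_expr /head_expr /main_term.
case: ltnP => [lo_hi | _].
  have lo_ge1 : (1 <= win_lo N t)%N by rewrite leq_maxr.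
  have hi_le : (win_hi P t <= T)%N by rewrite (leq_trans (leq_subr _ _)) //; case/andP: t_T.
  have [_ _ hp1l hp2l] := hk (win_lo N t) ltac:(lia).
  have [_ _ hp1h hp2h] := hk (win_hi P t) ltac:(lia).
  by case: (ramp P); case: b; split; [within_tac | rewrite /=; nth_tac; rewrite ratr_nat; ring
                                     | within_tac | rewrite /=; nth_tac; rewrite ratr_nat; ring
                                     | within_tac | rewrite /=; nth_tac; rewrite ratr_nat; ring
                                     | within_tac | rewrite /=; nth_tac; rewrite ratr_nat; ring].
by case: (ramp P); case: b; split; [within_tac | rewrite /=; nth_tac; ring
                                   | within_tac | rewrite /=; nth_tac; ring
                                   | within_tac | rewrite /=; nth_tac; ring
                                   | within_tac | rewrite /=; nth_tac; ring].
Qed.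

Lemma ops_value_expr t b : (ops (value_expr P N c t b) <= 16)%N.
Proof.
by rewrite /value_expr /window_expr /head_expr; case: (ramp P); case: b; case: ltnP.
Qed.

Lemma exec_tstep regs t : layout_ok regs -> t_ok t ->
  holds (exec (tstep P N c t) regs).2 (exec (tstep P N c t) regs).1.1 (bv t) /\
  holds (exec (tstep P N c t) regs).2 (exec (tstep P N c t) regs).1.2 (best_eta P Cb V Vb y t).
Proof.
move=> ok t_okt; have [_ [_ hz hE _] hk] := ok.
have [_ _ /hk[_ y_up _ _] /hk[_ y_down _ _]] := t_okt.
rewrite /tstep /= (nth_holds y_down) (nth_holds y_up) /bv /best_viol /best_eta.
case: ifP => _; rewrite exec_bind /=;
  [have [+ val] := eval_value_expr false ok t_okt | have [+ val] := eval_value_expr true ok t_okt];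
  by move=> /exec_emit; rewrite val => h; split; [exact: h | exact: holds_exec].
Qed.

Lemma cost_tstep t : cost_le R (tstep P N c t) 17.
Proof.
move=> regs.
have := ops_value_expr t false; have := ops_value_expr t true.
rewrite /tstep /=; case: ifP => _; rewrite cost_bind cost_emit /=; lia.
Qed.

#[global] Opaque tstep.


Lemma exec_tloop ts best regs : layout_ok regs -> {in ts, forall t, t_ok t} ->
  holds regs best.1.2 (bv best.1.1) -> holds regs best.2 (best_eta P Cb V Vb y best.1.1) ->
  let r := exec (tloop P N c ts best) regs in
  [/\ r.1.1.1 = best.1.1 \/ r.1.1.1 \in ts, holds r.2 r.1.1.2 (bv r.1.1.1),
      holds r.2 r.1.2 (best_eta P Cb V Vb y r.1.1.1), bv best.1.1 <= bv r.1.1.1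
    & {in ts, forall t, bv t <= bv r.1.1.1}].
Proof.
elim: ts best regs => [|t ts IH] best regs ok ts_ok h_best h_eta /=; first by split => //; left.
rewrite exec_bind; have [h_val h_eta_t] := exec_tstep ok (ts_ok t (mem_head t ts)).
set r := exec (tstep P N c t) regs in h_val h_eta_t *.
have pre : prefix regs r.2 := prefix_exec _ _.
have ok' := layout_ok_prefix pre ok.
have ts_ok' : {in ts, forall t, t_ok t} by move=> t' t'_in; apply: ts_ok; rewrite inE t'_in orbT.
rewrite /= (nth_holds h_val) (nth_holds (holds_prefix pre h_best)).
case: ifP => [le_vt | /negbT lt_vt].
- have [r1 r2 r3 r4 r5] := IH best r.2 ok' ts_ok' (holds_prefix pre h_best) (holds_prefix pre h_eta).
  split => //; first by case: r1 => [->|in_ts]; [left | right; rewrite inE in_ts orbT].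
  by move=> t'; rewrite inE => /predU1P[-> | /r5 //]; apply: le_trans le_vt r4.
- have [r1 r2 r3 r4 r5] := IH (t, r.1.1, r.1.2) r.2 ok' ts_ok' h_val h_eta_t.
  split => //.
  + by case: r1 => /= [->|in_ts]; right; rewrite inE ?eqxx ?in_ts ?orbT.
  + by apply: le_trans (ltW _) r4; rewrite ltNge.
  + by move=> t'; rewrite inE => /predU1P[-> | /r5].
Qed.

Lemma cost_tloop ts best : cost_le R (tloop P N c ts best) (18 * size ts).
Proof.
elim: ts best => [|t ts IH] best regs //=.
rewrite cost_bind; have := cost_tstep t regs; set r := exec (tstep P N c t) regs.
by rewrite /=; case: ifP => _; [have := IH best r.2 | have := IH (t, r.1.1, r.1.2) r.2]; lia.
Qed.

End Sweep.

Definition scan_bound (P : family_shape) T L := minn (L + 1 - L_gap P) (T + 1 - T_gap P).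

Definition setup (P : family_shape) (T L : nat) (xi yi : nat -> nat)
    : prog (layout * nat * (nat -> bool)) :=
  bind (emit (Bin ASub (Reg 0) (Reg 3))) (fun iA =>
  bind (emit (Bin ADiv (Reg iA) (Reg 2))) (fun iq =>
  bind (emit (Cst 0)) (fun iz =>
  bind (emit (Cst (eta_max P)%:R)) (fun iL =>
  bind (If iL iq (Ret iL) (Ret iq)) (fun iE =>
  bind (emit (Bin AMul (Reg iE) (Reg 2))) (fun iEV =>
  bind (scan iq 0 (scan_bound P T L)) (fun N =>
  bind (prefix_sums yi 2 T.-1 (fun _ => iz, fun _ => iz, xpred0)) (fun s =>
  Ret (Layout iA iz iE iEV xi yi s.1.1 s.1.2, N, s.2))))))))).

Section Setup.
Variables (R : realType) (P : family_shape) (T L : nat) (Cb V Vb : R) (x y : nat -> R).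
Variables (xi yi : nat -> nat).
Hypothesis T_ge1 : (1 <= T)%N.

Lemma exec_setup (regs : seq R) :
  [/\ holds regs 0 Cb, holds regs 2 V & holds regs 3 Vb] ->
  (forall k, (1 <= k <= T)%N -> holds regs (xi k) (x k) /\ holds regs (yi k) (y k)) ->
  let: (c, N, up) := (exec (setup P T L xi yi) regs).1 in
  [/\ layout_ok P T Cb V Vb x y c (exec (setup P T L xi yi) regs).2,
      forall s, (s < N)%N =
        [&& (s + L_gap P <= L)%N, (s + T_gap P <= T)%N & s%:Z <= sigma Cb V Vb]
    & forall j, (2 <= j <= T)%N -> up j = ~~ (y j <= y j.-1)].
Proof.
move=> [h0 h2 h3] hxy.
rewrite /setup exec_bind; set r1 := exec (emit _) regs; cbv beta.
have hA : holds r1.2 r1.1 (Cb - Vb).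
  have := @exec_emit _ regs (Bin ASub (Reg 0) (Reg 3)).
  by rewrite /= (nth_holds h0) (nth_holds h3); apply; within_tac.
rewrite exec_bind; set r2 := exec (emit _) r1.2; cbv beta.
have hq : holds r2.2 r2.1 ((Cb - Vb) / V).
  have := @exec_emit _ r1.2 (Bin ADiv (Reg r1.1) (Reg 2)).
  by rewrite /= (nth_holds hA) (nth_holds (holds_exec _ h2)); apply; within_tac.
rewrite exec_bind; set r3 := exec (emit _) r2.2; cbv beta.
have hz : holds r3.2 r3.1 0.
  by have := @exec_emit _ r2.2 (Cst 0); rewrite /= rmorph0; apply.
rewrite exec_bind; set r4 := exec (emit _) r3.2.
have hL : holds r4.2 r4.1 (eta_max P)%:R.
  by have := @exec_emit _ r3.2 (Cst (eta_max P)%:R); rewrite /= ratr_nat; apply.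
cbv beta; rewrite exec_select (nth_holds hL) (nth_holds (holds_exec _ (holds_exec _ hq))).
set e_reg := if _ <= _ then r4.1 else r2.1.
have hE : holds r4.2 e_reg (eta_cap P Cb V Vb).
  by rewrite /e_reg /eta_cap /ramp_ratio; case: ifP => _; [|apply: holds_exec; apply: holds_exec].
rewrite exec_bind; set r5 := exec (emit _) r4.2; cbv beta.
have hEV : holds r5.2 r5.1 (eta_cap P Cb V Vb * V).
  have := @exec_emit _ r4.2 (Bin AMul (Reg e_reg) (Reg 2)).
  have V_r4 : holds r4.2 2 V by holds_tac.
  by rewrite /= (nth_holds hE) (nth_holds V_r4); apply; within_tac.

rewrite exec_bind; set r6 := exec (scan _ _ _) r5.2; cbv beta.
have ltn_N s : (s < r6.1)%N =
    [&& (s + L_gap P <= L)%N, (s + T_gap P <= T)%N & s%:Z <= sigma Cb V Vb].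
  have q_r5 : holds r5.2 r2.1 ((Cb - Vb) / V) by holds_tac.
  rewrite (exec_scan _ q_r5) // add0n le_sigma /scan_bound andbA.
  by congr (_ && _); apply/idP/andP; lia.
rewrite exec_bind; set r7 := exec (prefix_sums _ _ _ _) r6.2; rewrite /=.
have y_r6 k : (1 <= k <= T)%N -> holds r6.2 (yi k) (y k) by move=> /hxy[_ ?]; holds_tac.
have init k : (1 <= k < 2)%N -> sums_ok y r6.2 (fun=> r3.1, fun=> r3.1, xpred0) k.
  move=> /andP[k1 k2]; have -> : k = 1%N by lia.
  have z6 : holds r6.2 r3.1 0 by holds_tac.
  by rewrite /sums_ok /rise_sum /rise_moment !big_geq.
have sums_r7 := exec_prefix_sums (T := T) (j := 2) (fuel := T.-1) (leqnn 2) ltac:(lia) y_r6 init.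
split => //.
- split; first by split; holds_tac.
    by split; holds_tac.
  move=> k k_range; have [hx hy] := hxy k k_range.
  have [p1_k p2_k _] := sums_r7 k ltac:(lia).
  by split => //; holds_tac.
- by move=> j /andP[j_ge2 j_le]; have [_ _ /(_ j_ge2)] := sums_r7 j ltac:(lia).
Qed.

End Setup.


Definition search (P : family_shape) (T L : nat) (xi yi : nat -> nat) : prog (nat * seq nat * nat) :=
  bind (setup P T L xi yi) (fun '(c, N, up) =>
  bind (tstep P N c (t_min P)) (fun r =>
  bind (tloop P N c (iota (t_min P).+1 (t_max P - t_min P)) (t_min P, r.1, r.2)) (fun b =>
  Ret (b.1.1, [seq (b.1.1 - j)%N | j <- window P N b.1.1 & up j], b.2)))).

Section Search.
Variables (R : realType) (P : family_shape) (T L : nat) (Cb V Vb : R) (x y : nat -> R).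
Variables (xi yi : nat -> nat).
Hypotheses (V_gt0 : 0 < V) (Vb_le_Cb : Vb <= Cb) (T_ge1 : (1 <= T)%N).
Hypothesis eta_inert : ~~ has_eta P -> eta_up P =1 eta_down P.
Hypothesis times_ok : forall t, (t_min P <= t <= t_max P)%N -> t_ok P T t.

Lemma exec_search (regs : seq R) :
  [/\ holds regs 0 Cb, holds regs 2 V & holds regs 3 Vb] ->
  (forall k, (1 <= k <= T)%N -> holds regs (xi k) (x k) /\ holds regs (yi k) (y k)) ->
  (t_min P <= t_max P)%N ->
  let: (t0, S0, ie) := (exec (search P T L xi yi) regs).1 in
  let eta0 := nth 0 (exec (search P T L xi yi) regs).2 ie in
  gen_in P T L Cb V Vb t0 S0 eta0 /\
  forall t S eta, gen_in P T L Cb V Vb t S eta ->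
    gen_viol P Cb V Vb x y t S eta <= gen_viol P Cb V Vb x y t0 S0 eta0.
Proof.
move=> inp xy t_range.
rewrite /search exec_bind.
have := exec_setup P L T_ge1 inp xy.
case: (exec (setup P T L xi yi) regs) => [[[c N] up] regs1] /= [ok ltn_N up_ok]; cbv beta iota.
rewrite exec_bind; set r := exec (tstep P N c (t_min P)) regs1.
have [h_val h_eta] : holds r.2 r.1.1 (best_viol P Cb V Vb x y N (t_min P)) /\
    holds r.2 r.1.2 (best_eta P Cb V Vb y (t_min P)).
  by apply: exec_tstep ok (times_ok _); rewrite leqnn.
cbv beta; rewrite exec_bind.
set ts := iota (t_min P).+1 (t_max P - t_min P).
have ts_ok : {in ts, forall t, t_ok P T t} by move=> t; rewrite mem_iota => ?; apply: times_ok; lia.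
have := exec_tloop (best := (t_min P, r.1.1, r.1.2)) (layout_ok_prefix (prefix_exec _ regs1) ok) ts_ok h_val h_eta.
set b := exec (tloop P N c ts _) r.2; cbv beta => /= -[t0_in v0 e0 le_first le_rest].
have t0_range : (t_min P <= b.1.1.1 <= t_max P)%N.
  case: t0_in => [-> | ]; first by rewrite leqnn.
  by rewrite mem_iota; lia.
set t0 := b.1.1.1 in t0_range v0 e0 le_first le_rest *.
have [/andP[t0_ge1 t0_le] _ _ _] := times_ok t0_range.
have best_S0 : [seq (t0 - j)%N | j <- window P N t0 & up j] = best_S P y N t0.
  congr map; apply: eq_in_filter => j; rewrite mem_window /win_lo /win_hi => j_win.
  by apply: up_ok; lia.
rewrite best_S0 (nth_holds e0); split; first exact: gen_in_best.
move=> t S eta t_in; rewrite gen_viol_best.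
apply: le_trans (gen_viol_le_best x y V_gt0 Vb_le_Cb eta_inert ltn_N t_in) _.
have [/andP[t_lo t_hi] _ _ _] := t_in.
case: (ltngtP (t_min P) t) => [lt_t | | <-] //; last by lia.
by apply: le_rest; rewrite mem_iota; lia.
Qed.

End Search.

Lemma cost_setup (R : realType) P T L xi yi :
  cost_le R (setup P T L xi yi) (6 + 2 * scan_bound P T L + 7 * T.-1).
Proof.
rewrite /setup.
do 4 (apply: cost_le_bind => [|?|]; [exact: cost_le_emit | | rewrite /=; lia]).
apply: (cost_le_bind (a := 1)) => [|?|]; [exact: cost_le_If | | rewrite /=; lia].
apply: cost_le_bind => [|?|]; [exact: cost_le_emit | | rewrite /=; lia].
apply: cost_le_bind => [|?|]; [exact: cost_scan | | rewrite /=; lia].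
by apply: cost_le_bind => [|?|]; [exact: cost_prefix_sums | | rewrite /=; lia].
Qed.
Lemma cost_search (R : realType) P T L xi yi : (t_max P <= T)%N ->
  cost_le R (search P T L xi yi) (6 + 2 * scan_bound P T L + 7 * T.-1 + 17 + 18 * T).
Proof.
move=> t_max_le; rewrite /search.
apply: cost_le_bind => [|[[c N] up]|]; [exact: cost_setup | | lia].
apply: cost_le_bind => [|r|]; [exact: cost_tstep | | lia].
apply: cost_le_bind => [|b|]; [exact: cost_tloop | | rewrite size_iota; lia].
by [].
Qed.

Definition tmap (rev : bool) (T t : nat) := if rev then (T.+1 - t)%N else t.

Lemma tmapK rev T t : (1 <= t <= T)%N -> tmap rev T (tmap rev T t) = t.
Proof. by case: rev => /=; lia. Qed.

Definition reversed (f : fam) := if f is (F2 | F4 | F6) then true else false.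

(* F2, F4 and F6 are F1, F3 and F5 for the time-reversed data, see [in_familyE]. *)
Definition fam_shape (f : fam) (T L : nat) : family_shape :=
  match f with
  | F1 | F2 => FamilyShape 0 1 2 1 T false 0 false id id id
  | F3 | F4 => FamilyShape 0 1 3 1 T.-1 true L.-1 false id succn id
  | F5 | F6 => FamilyShape 1 0 2 2 T true L true predn id predn
  end.

Lemma tmap_range rev T t : (1 <= t <= T)%N -> (1 <= tmap rev T t <= T)%N.
Proof. by case: rev => /=; lia. Qed.

Lemma fam_shape_ok f T L :
  [/\ t_max (fam_shape f T L) <= T,
      forall t, t_min (fam_shape f T L) <= t <= t_max (fam_shape f T L) ->
        t_ok (fam_shape f T L) T t
    & ~~ has_eta (fam_shape f T L) -> eta_up (fam_shape f T L) =1 eta_down (fam_shape f T L)]%N.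
Proof.
case: f; split=> [||//]; rewrite /= ?leq_pred // => t; rewrite /t_ok /= -?subn1.
all: by move=> ?; split; lia.
Qed.

Lemma all_fwd_rev T t (S : seq nat) : (t <= T)%N ->
  all (fun s => t + s + 1 <= T)%N S = all (fun s => s + 2 <= tmap true T t)%N S.
Proof. by move=> t_le; apply: eq_all => s /=; apply/idP/idP; lia. Qed.

Lemma in_familyE (R : realType) f T L (Cb V Vb : R) t S eta : (1 <= L)%N ->
  in_family f T L Cb V Vb t S eta <->
  gen_in (fam_shape f T L) T L Cb V Vb (tmap (reversed f) T t) S eta.
Proof.
move=> L_ge1; have L1 : (L.-1)%:R = L%:R - 1 :> R by rewrite -subn1 natrB.
rewrite /gen_in /eta_ok /ramp_ratio /in_family; case: f => /=.
- by split=> [[S_okS [t_rng S_t]] | [t_rng S_okS S_t _]].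
- split=> [[S_okS [t_rng S_t]] | [t_rng S_okS S_t _]].
    by split => //; [lia | rewrite -all_fwd_rev //; lia].
  by split => //; split; [lia | rewrite all_fwd_rev ?tmapK //; lia].
- split=> [[S_okS [e0 [eL [eq [[t1 t2] S_t]]]]] | [t_rng S_okS S_t /(_ isT) [e0 eL eq]]].
    by split=> // [|_]; [lia | rewrite L1].
  by rewrite -L1; do !split => //; lia.
- split=> [[S_okS [e0 [eL [eq [t_rng S_t]]]]] | [t_rng S_okS S_t /(_ isT) [e0 eL eq]]].
    by split=> // [||_]; [lia | rewrite -all_fwd_rev //; lia | rewrite L1].
  by rewrite -L1; do !split => //; try lia; rewrite all_fwd_rev //; lia.
- split=> [[S_okS [e0 [eL [eq [t_rng S_t]]]]] | [t_rng S_okS S_t /(_ isT) [e0 eL eq]]].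
    by split=> // [|_]; lia.
  by do !split => //; lia.
- split=> [[S_okS [e0 [eL [eq [t_rng S_t]]]]] | [t_rng S_okS S_t /(_ isT) [e0 eL eq]]].
    by split=> //; [lia | rewrite -all_fwd_rev //; lia].
  by do !split => //; try lia; rewrite (@all_fwd_rev T t S) //; lia.
Qed.

Lemma sum_fwd_rev (R : realType) (Cb V Vb : R) y T t S :
  all (fun s => t + s + 1 <= T)%N S ->
  sum_fwd Cb V Vb y t S = sum_back Cb V Vb (y \o tmap true T) (tmap true T t) S.
Proof.
move=> /allP S_t; apply: eq_big_seq => s /S_t /= s_t.
by congr (_ * (y _ - y _)); lia.
Qed.

Lemma violationE (R : realType) f T L (Cb V Vb : R) x y t S eta :
  in_family f T L Cb V Vb t S eta ->
  violation f Cb V Vb x y t S eta =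
  gen_viol (fam_shape f T L) Cb V Vb (x \o tmap (reversed f) T) (y \o tmap (reversed f) T)
    (tmap (reversed f) T t) S eta.
Proof.
rewrite /violation /gen_viol /main_term /rhs; case: f => /=.
- by move=> _; rewrite /sum_back /=; ring.
- move=> [_ [t_rng S_t]]; rewrite (sum_fwd_rev _ _ _ _ S_t) /=.
  have -> : (T.+1 - (T.+1 - t) = t)%N by lia.
  ring.
- by move=> _; rewrite /sum_back /=; ring.
- move=> [_ [_ [_ [_ [t_rng S_t]]]]]; rewrite (sum_fwd_rev _ _ _ _ S_t) /=.
  have -> : (T.+1 - (T.+1 - t) = t)%N by lia.
  have -> : (T.+1 - (T.+1 - t).+1 = t.-1)%N by lia.
  ring.
- by move=> _; rewrite /sum_back /=; ring.
- move=> [_ [_ [_ [_ [t_rng S_t]]]]]; rewrite (sum_fwd_rev _ _ _ _ S_t) /=.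
  have -> : (T.+1 - (T.+1 - t) = t)%N by lia.
  have -> : (T.+1 - (T.+1 - t).-1 = t.+1)%N by lia.
  ring.
Qed.

Lemma size_inputs (R : realType) T (Cb Cu V Vb : R) x y :
  size (inputs T Cb Cu V Vb x y) = (4 + T + T)%N.
Proof. by rewrite /inputs !size_cat !size_map !size_iota /=; lia. Qed.

Lemma holds_inputs_x (R : realType) T (Cb Cu V Vb : R) x y k : (1 <= k <= T)%N ->
  holds (inputs T Cb Cu V Vb x y) (3 + k) (x k).
Proof.
move=> k_range; split; first by rewrite size_inputs; lia.
rewrite /inputs (_ : 3 + k = (k - 1).+4)%N; last by lia.
rewrite /= nth_cat size_map size_iota (_ : k - 1 < T)%N; last by lia.
by rewrite (nth_map 0%N) ?size_iota ?nth_iota; [congr x; lia | lia | lia].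
Qed.

Lemma holds_inputs_y (R : realType) T (Cb Cu V Vb : R) x y k : (1 <= k <= T)%N ->
  holds (inputs T Cb Cu V Vb x y) (3 + T + k) (y k).
Proof.
move=> k_range; split; first by rewrite size_inputs; lia.
rewrite /inputs (_ : 3 + T + k = (T + (k - 1)).+4)%N; last by lia.
rewrite /= nth_cat size_map size_iota (_ : T + (k - 1) < T = false)%N; last by lia.
rewrite (_ : T + (k - 1) - T = k - 1)%N; last by lia.
by rewrite (nth_map 0%N) ?size_iota ?nth_iota; [congr y; lia | lia | lia].
Qed.

(* Registers 3 + k and 3 + T + k hold x_k and y_k (see [inputs]). *)
Definition family_prog (f : fam) (T L : nat) : ctree :=
  let rev := reversed f in
  compile (search (fam_shape f T L) T L (fun k => 3 + tmap rev T k) (fun k => 3 + T + tmap rev T k))%N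
    (4 + T + T) (fun r _ => CLeaf (tmap rev T r.1.1) r.1.2 r.2).

Lemma run_family_prog (R : realType) f T L (Cb Cu V Vb : R) x y :
  (1 <= T)%N -> (1 <= L)%N -> 0 < V -> Vb + V <= Cb ->
  let out := run (family_prog f T L) (inputs T Cb Cu V Vb x y) in
  (out.2 <= 52 * T)%N /\
  ((exists t S eta, in_family f T L Cb V Vb t S eta /\ violation f Cb V Vb x y t S eta > 0) ->
   let '(t0, S0, eta0) := out.1 in
   in_family f T L Cb V Vb t0 S0 eta0 /\
   forall t S eta, in_family f T L Cb V Vb t S eta ->
     violation f Cb V Vb x y t S eta <= violation f Cb V Vb x y t0 S0 eta0).
Proof.
move=> T_ge1 L_ge1 V_gt0 le_VbV_Cb.
have [t_max_le times_ok eta_inert] := fam_shape_ok f T L.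
rewrite /family_prog -(size_inputs T Cb Cu V Vb x y) run_compile /=.
split.
  rewrite add0n; apply: leq_trans (cost_search L _ _ t_max_le _) _.
  rewrite /scan_bound; lia.
move=> [t [S [eta [in_f _]]]].
have in_gen := (in_familyE f T Cb V Vb t S eta L_ge1).1 in_f.
have [/andP[t_lo t_hi] _ _ _] := in_gen.
have Vb_le_Cb : Vb <= Cb by lra.
have consts : [/\ holds (inputs T Cb Cu V Vb x y) 0 Cb, holds (inputs T Cb Cu V Vb x y) 2 V
                 & holds (inputs T Cb Cu V Vb x y) 3 Vb] by split; split; rewrite ?size_inputs.
have xy k : (1 <= k <= T)%N ->
    holds (inputs T Cb Cu V Vb x y) (3 + tmap (reversed f) T k) ((x \o tmap (reversed f) T) k) /\
    holds (inputs T Cb Cu V Vb x y) (3 + T + tmap (reversed f) T k) ((y \o tmap (reversed f) T) k).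
  by move=> /(tmap_range (reversed f)) k_range; split; [apply: holds_inputs_x | apply: holds_inputs_y].
have := exec_search L V_gt0 Vb_le_Cb T_ge1 eta_inert times_ok consts xy (leq_trans t_lo t_hi).
case: (exec _ _) => [[[t0 S0] ie] regs] /= [gin0 opt].
have [/andP[t0_lo t0_hi] _ _ _] := gin0.
have [t0_range _ _ _] := times_ok t0 ltac:(lia).
have in_f0 : in_family f T L Cb V Vb (tmap (reversed f) T t0) S0 (nth 0 regs ie).
  by apply/in_familyE; rewrite ?tmapK.
split => // t' S' eta' in_f'.
rewrite (violationE x y in_f') (violationE x y in_f0) tmapK //.
by apply/opt/in_familyE.
Qed.

Theorem proposition7 (R : realType) (f : fam) :
  exists c : nat,
  forall T L : nat, (1 <= T)%N -> (1 <= L)%N ->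
  exists p : ctree,
  forall (Cb Cu V Vb : R) (x y : nat -> R),
    Cb > Cu -> Cu > 0 -> V > 0 -> Vb + V <= Cb -> Cu < Vb -> Vb < Cu + V ->
    (forall t, (1 <= t <= T)%N -> 0 <= x t /\ 0 <= y t) ->
    let out := run p (inputs T Cb Cu V Vb x y) in
    (out.2 <= c * T)%N /\
    ((exists t Sx eta, in_family f T L Cb V Vb t Sx eta /\
                      violation f Cb V Vb x y t Sx eta > 0) ->
     let '(t0, Sx0, eta0) := out.1 in
     in_family f T L Cb V Vb t0 Sx0 eta0 /\
     forall t Sx eta, in_family f T L Cb V Vb t Sx eta ->
       violation f Cb V Vb x y t Sx eta <= violation f Cb V Vb x y t0 Sx0 eta0).
Proof.
exists 52 => T L T_ge1 L_ge1; exists (family_prog f T L).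
move=> Cb Cu V Vb x y _ _ V_gt0 le_VbV_Cb _ _ _.
exact: run_family_prog.
Qed.
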